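(* There is a theory $\mathcal{T}$ — for instance the theory whose domain is the integers $\mathbb{Z}$, with integer constants, increment ($x+1$), decrement ($x-1$) and equality — for which the following problem is undecidable: given a TSL($\mathcal{T}$) formula $\phi$ over finite sets $R$ of state variables and $I$ of input variables, decide whether $\phi$ is realizable, i.e. whether there exists a theory Mealy machine realizing $\phi$. In other words, the synthesis problem for TSL modulo theories is undecidable.
   Context: A theory $\mathcal{T}$ consists of a signature (constants, functions, predicates) with a fixed interpretation over a domain $\mathbb{T}$. For a set of variables $V$, $E^{\mathbb{T}}_{\mathcal{T}}(V)$ denotes the terms and $E^{\mathbb{B}}_{\mathcal{T}}(V)$ the formulas of $\mathcal{T}$ with free variables in $V$. Let $R$ be a finite set of state variables and $I$ a finite set of input variables; valuations are $\mathbf{R}=R\to\mathbb{T}$ and $\mathbf{I}=I\to\mathbb{T}$. An update function $\mathbf{u}$ assigns to each $r\in R$ a term $\mathbf{u}(r)\in E^{\mathbb{T}}_{\mathcal{T}}(R\cup I)$; $\mathbf{U}$ is the set of update functions, and $\mathbf{u}[\mathbf{r},\mathbf{i}]\in\mathbf{R}$ is given by $\mathbf{u}[\mathbf{r},\mathbf{i}](r)=$ the value of $\mathbf{u}(r)$ under $\mathbf{r},\mathbf{i}$. TSL($\mathcal{T}$) formulas are generated by: atomic propositions $p\in E^{\mathbb{B}}_{\mathcal{T}}(R\cup I)$; update atoms $[r\leftarrow e]$ with $r\in R$, $e\in E^{\mathbb{T}}_{\mathcal{T}}(R\cup I)$; $\mathrm{true}$, $\mathrm{false}$; $\neg\phi$,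 $\phi\wedge\psi$, $\phi\,\mathbf{U}\,\psi$, $\mathbf{X}\phi$ (with $\mathbf{F}\phi=\mathrm{true}\,\mathbf{U}\,\phi$, $\mathbf{G}\phi=\neg\mathbf{F}\neg\phi$). Semantics over traces $\rho=\rho_0\rho_1\cdots\in(\mathbf{R}\times\mathbf{I})^\omega$, $\rho_j=(\mathbf{r}_j,\mathbf{i}_j)$: $\rho\models p$ iff $(\mathbf{r}_0,\mathbf{i}_0)\models p$; $\rho\models[r\leftarrow e]$ iff $\mathbf{r}_1(r)$ equals the value of $e$ under $(\mathbf{r}_0,\mathbf{i}_0)$; Boolean and temporal operators as in LTL. A theory Mealy machine is $(Q,q_0,P,\mathbf{r}_0,\delta,\mu)$ with finite state set $Q$, initial state $q_0$, finite predicate set $P\subseteq E^{\mathbb{B}}_{\mathcal{T}}(R\cup I)$, initial valuation $\mathbf{r}_0\in\mathbf{R}$, transition function $\delta:Q\times 2^P\to Q$ and update selection $\mu:Q\times2^P\to\mathbf{U}$. For $\mathbf{v}=(\mathbf{r},\mathbf{i})$ let $P_{\mathbf{v}}=\{p\in P\mid \mathbf{v}\models p\}$. The run on input sequence $\mathbf{i}_0\mathbf{i}_1\cdots\in\mathbf{I}^\omega$ is $(q_0,\mathbf{r}_0)(q_1,\mathbf{r}_1)\cdots$ with $q_{k+1}=\delta(q_k,P_{(\mathbf{r}_k,\mathbf{i}_k)})$ and $\mathbf{r}_{k+1}=\mathbf{u}_k[\mathbf{r}_k,\mathbf{i}_k]$ where $\mathbf{u}_k=\mu(q_k,P_{(\mathbf{r}_k,\mathbf{i}_k)})$.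 The machine realizes $\phi$ if for every input sequence the induced trace $(\mathbf{r}_k,\mathbf{i}_k)_k$ satisfies $\phi$. *)

From mathcomp Require Import all_boot all_algebra.
Set Implicit Arguments. Unset Strict Implicit. Unset Printing Implicit Defensive.
Import GRing.Theory Num.Theory.
Local Open Scope ring_scope.

(* For a problem instance with R = {0..nR-1}, I = {0..nI-1}, well-formedness
   restricts indices below nR resp. nI. *)
Inductive tterm : Type :=
  | TConst of int
  | SVar of nat
  | IVar of nat
  | TInc of tterm
  | TDec of tterm.

Inductive tpred : Type :=
  | PEq of tterm & tterm
  | PNot of tpred
  | PAnd of tpred & tpred.

Definition valuation := nat -> int.

Fixpoint eval_term (rv iv : valuation) (t : tterm) : int :=
  match t with
  | TConst z => z
  | SVar n => rv n
  | IVar n => iv n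
  | TInc t => eval_term rv iv t + 1
  | TDec t => eval_term rv iv t - 1
  end.

Fixpoint eval_pred (rv iv : valuation) (p : tpred) : bool :=
  match p with
  | PEq a b => eval_term rv iv a == eval_term rv iv b
  | PNot p => ~~ eval_pred rv iv p
  | PAnd p q => eval_pred rv iv p && eval_pred rv iv q
  end.

Fixpoint wf_term (nR nI : nat) (t : tterm) : bool :=
  match t with
  | TConst _ => true
  | SVar n => (n < nR)%N
  | IVar n => (n < nI)%N
  | TInc t => wf_term nR nI t
  | TDec t => wf_term nR nI t
  end.

Fixpoint wf_pred (nR nI : nat) (p : tpred) : bool :=
  match p with
  | PEq a b => wf_term nR nI a && wf_term nR nI b
  | PNot p => wf_pred nR nI p
  | PAnd p q => wf_pred nR nI p && wf_pred nR nI q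
  end.

Inductive tsl : Type :=
  | FPred of tpred
  | FUpd of nat & tterm
  | FTrue
  | FFalse
  | FNot of tsl
  | FAnd of tsl & tsl
  | FUntil of tsl & tsl
  | FNext of tsl.

Fixpoint wf_tsl (nR nI : nat) (f : tsl) : bool :=
  match f with
  | FPred p => wf_pred nR nI p
  | FUpd r e => (r < nR)%N && wf_term nR nI e
  | FTrue | FFalse => true
  | FNot f => wf_tsl nR nI f
  | FAnd f g => wf_tsl nR nI f && wf_tsl nR nI g
  | FUntil f g => wf_tsl nR nI f && wf_tsl nR nI g
  | FNext f => wf_tsl nR nI f
  end.

Fixpoint holds (rs ins : nat -> valuation) (j : nat) (f : tsl) : Prop :=
  match f with
  | FPred p => eval_pred (rs j) (ins j) p
  | FUpd r e => rs j.+1 r = eval_term (rs j) (ins j) e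
  | FTrue => True
  | FFalse => False
  | FNot f => ~ holds rs ins j f
  | FAnd f g => holds rs ins j f /\ holds rs ins j g
  | FUntil f g => exists k, (j <= k)%N /\ holds rs ins k g /\
                    forall m, (j <= m)%N -> (m < k)%N -> holds rs ins m f
  | FNext f => holds rs ins j.+1 f
  end.

(* The finite predicate set P ins given as a family P : 'I_k -> tpred;
   2^P ins {set 'I_k}; an update function ins u : nat -> tterm (u r for r in R). *)
Unset Implicit Arguments.
Record mealy : Type := Mealy {
  mQ : finType;
  mq0 : mQ;
  mk : nat;
  mP : 'I_mk -> tpred;
  mr0 : valuation;
  mdelta : mQ -> {set 'I_mk} -> mQ;
  mmu : mQ -> {set 'I_mk} -> nat -> tterm
}.
Set Implicit Arguments.

Definition wf_mealy (nR nI : nat) (M : mealy) : Prop :=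
  (forall p, wf_pred nR nI (mP M p)) /\
  (forall q s r, (r < nR)%N -> wf_term nR nI (mmu M q s r)).

Definition Pval (M : mealy) (rv iv : valuation) : {set 'I_(mk M)} :=
  [set p | eval_pred rv iv (mP M p)].

Definition apply_update (nR : nat) (u : nat -> tterm) (rv iv : valuation)
  : valuation := fun r => if (r < nR)%N then eval_term rv iv (u r) else 0.

Fixpoint mrun (nR : nat) (M : mealy) (ins : nat -> valuation) (k : nat)
  : mQ M * valuation :=
  match k with
  | 0 => (mq0 M, mr0 M)
  | k'.+1 =>
      let (q, rv) := mrun nR M ins k' in
      let s := Pval M rv (ins k') in
      (mdelta M q s, apply_update nR (mmu M q s) rv (ins k'))
  end.

Definition realizes (nR nI : nat) (M : mealy) (f : tsl) : Prop :=
  forall ins : nat -> valuation, holds (fun k => (mrun nR M ins k).2) ins 0 f.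

Definition realizable (nR nI : nat) (f : tsl) : Prop :=
  exists M : mealy, wf_mealy nR nI M /\ realizes nR nI M f.

Definition npair (a b : nat) : nat := (((a + b) * (a + b).+1)./2 + b)%N.

Definition enc_int (z : int) : nat :=
  match z with Posz n => n.*2 | Negz n => n.*2.+1 end.

Fixpoint enc_term (t : tterm) : nat :=
  match t with
  | TConst z => npair 0 (enc_int z)
  | SVar n => npair 1 n
  | IVar n => npair 2 n
  | TInc t => npair 3 (enc_term t)
  | TDec t => npair 4 (enc_term t)
  end.

Fixpoint enc_pred (p : tpred) : nat :=
  match p with
  | PEq a b => npair 0 (npair (enc_term a) (enc_term b))
  | PNot p => npair 1 (enc_pred p)
  | PAnd p q => npair 2 (npair (enc_pred p) (enc_pred q))
  end.

Fixpoint enc_tsl (f : tsl) : nat :=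
  match f with
  | FPred p => npair 0 (enc_pred p)
  | FUpd r e => npair 1 (npair r (enc_term e))
  | FTrue => npair 2 0
  | FFalse => npair 3 0
  | FNot f => npair 4 (enc_tsl f)
  | FAnd f g => npair 5 (npair (enc_tsl f) (enc_tsl g))
  | FUntil f g => npair 6 (npair (enc_tsl f) (enc_tsl g))
  | FNext f => npair 7 (enc_tsl f)
  end.

Definition enc_instance (nR nI : nat) (f : tsl) : nat :=
  npair nR (npair nI (enc_tsl f)).

(* The machine halts when the program counter leaves the program. *)
Inductive cinstr : Type := CInc of nat | CDec of nat & nat.

Definition cconfig := (nat * (nat -> nat))%type.

Definition cstep (P : seq cinstr) (c : cconfig) : cconfig :=
  let (pc, regs) := c in
  match nth (CInc 0) P pc, (pc < size P)%N with
  | _, false => c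
  | CInc r, true => (pc.+1, fun x => if x == r then (regs x).+1 else regs x)
  | CDec r j, true =>
      if regs r == 0%N then (j, regs)
      else (pc.+1, fun x => if x == r then (regs x).-1 else regs x)
  end.

Definition crun (P : seq cinstr) (t : nat) (c : cconfig) : cconfig :=
  iter t (cstep P) c.

Definition cinit (n : nat) : cconfig := (0%N, fun x => if x == 0%N then n else 0%N).

Definition cdecides_on (P : seq cinstr) (D Q : nat -> Prop) : Prop :=
  forall n, D n -> exists t,
    let c := crun P t (cinit n) in
    (size P <= c.1)%N /\ (Q n <-> c.2 0%N = 0%N).

From mathcomp Require Import all_boot all_algebra.
From mathcomp Require Import zify.
From Stdlib Require Import Classical FunctionalExtensionality.
Set Implicit Arguments. Unset Strict Implicit. Unset Printing Implicit Defensive.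

(* Suppose a counter machine [P] decided realizability. The TSL formula [simF Q m]
   describes, with the program counter and the registers of a counter machine [Q] as
   state variables, a run of [Q] that halts; conjoined with "register 1 initially
   holds A", it is realizable iff [Q] halts on input [A]: a Mealy machine can replay
   a finite halting run, and conversely the trace of any realizing machine follows
   the run of [Q] step by step. Let [Q] be the machine that, on input [A], computes
   the code of this instance, runs [P] on it, and halts iff [P] answers
   "unrealizable". Taking for [A] the code of [simF Q m] itself, [Q] halts on [A]
   iff its own instance is unrealizable iff [Q] does not halt on [A]. *)

(** * Counter machines *)

Definition halts (P : seq cinstr) (c : cconfig) := exists t, size P <= (crun P t c).1.

Definition reach (Q : seq cinstr) (c c' : cconfig) := exists t, crun Q t c = c'.

Lemma crunS Q t c : crun Q t.+1 c = cstep Q (crun Q t c).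
Proof. by rewrite /crun iterS. Qed.

Lemma reach_refl Q c : reach Q c c.
Proof. by exists 0. Qed.

Lemma reach_trans Q c1 c2 c3 : reach Q c1 c2 -> reach Q c2 c3 -> reach Q c1 c3.
Proof. by move=> [t1 <-] [t2 <-]; exists (t2 + t1); rewrite /crun iterD. Qed.

Lemma cstep_halted Q c : size Q <= c.1 -> cstep Q c = c.
Proof.
case: c => pc f /= H; rewrite /cstep.
have -> : (pc < size Q) = false by lia.
by case: nth.
Qed.

Lemma crun_fixpoint Q c t : cstep Q c = c -> crun Q t c = c.
Proof. by move=> H; elim: t => // t IH; rewrite crunS IH. Qed.

Lemma crun_halted Q c t k : size Q <= (crun Q t c).1 -> t <= k -> crun Q k c = crun Q t c.
Proof.
move=> H /subnK <-; rewrite /crun iterD -/(crun Q t c).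
exact/crun_fixpoint/cstep_halted.
Qed.

Lemma halts_fixpoint Q c L :
  reach Q c L -> cstep Q L = L -> halts Q c -> size Q <= L.1.
Proof.
move=> [t1 HL] Hfix [t Ht].
have <- : crun Q (t + t1) c = L by rewrite /crun iterD -/(crun Q t1 c) HL; exact: crun_fixpoint.
by rewrite addnC (crun_halted Ht) ?leq_addl.
Qed.

Definition code_at (Q : seq cinstr) (a : nat) (B : seq cinstr) :=
  forall i, i < size B -> a + i < size Q /\ nth (CInc 0) Q (a + i) = nth (CInc 0) B i.

Lemma code_at_self Q : code_at Q 0 Q.
Proof. by move=> i Hi. Qed.

Lemma code_at_cat Q a B1 B2 :
  code_at Q a (B1 ++ B2) -> code_at Q a B1 /\ code_at Q (a + size B1) B2.
Proof.
move=> H; split=> i Hi.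
  by have := H i; rewrite size_cat nth_cat Hi; apply; lia.
have := H (size B1 + i); rewrite size_cat nth_cat addnA.
by rewrite ifN ?addKn; [apply; lia | lia].
Qed.

Definition incr_reg (f : nat -> nat) r x := if x == r then (f x).+1 else f x.
Definition decr_reg (f : nat -> nat) r x := if x == r then (f x).-1 else f x.

Lemma code_at_nth Q a B i :
  code_at Q a B -> i < size B -> code_at Q (a + i) [:: nth (CInc 0) B i].
Proof. by move=> HQ Hi [|//] _; rewrite addn0; apply: HQ. Qed.

Lemma reach_inc Q p r f : code_at Q p [:: CInc r] -> reach Q (p, f) (p.+1, incr_reg f r).
Proof. by move/(_ 0 erefl); rewrite addn0 => -[H1 H2]; exists 1; rewrite /= /cstep H2 H1. Qed.

Lemma reach_dec_zero Q p r j f : code_at Q p [:: CDec r j] -> f r = 0 -> reach Q (p, f) (j, f).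
Proof.
by move/(_ 0 erefl); rewrite addn0 => -[H1 H2] Hz; exists 1; rewrite /= /cstep H2 H1 /= Hz.
Qed.

Lemma reach_dec_succ Q p r j f : code_at Q p [:: CDec r j] -> f r != 0 ->
  reach Q (p, f) (p.+1, decr_reg f r).
Proof.
move/(_ 0 erefl); rewrite addn0 => -[H1 H2] Hz.
by exists 1; rewrite /= /cstep H2 H1 /= (negbTE Hz).
Qed.

Lemma reach_incs Q ss a f : code_at Q a (map CInc ss) ->
  reach Q (a, f) (a + size ss, fun x => f x + count_mem x ss).
Proof.
elim: ss a f => [|s ss IH] a f HQ /=.
  have -> : (fun x => f x + 0) = f by apply: functional_extensionality => x; rewrite addn0.
  by rewrite addn0; apply: reach_refl.
have [H1 H2] := code_at_cat (B1 := [:: CInc s]) HQ.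
apply: reach_trans (reach_inc f H1) _.
have := IH _ (incr_reg f s) H2; rewrite addn1 addnS.
congr reach; congr pair; apply: functional_extensionality => x.
by rewrite /incr_reg [s == x]eq_sym; case: (x == s) => /=; lia.
Qed.

Lemma halts_iff_loop Q c p r f : size Q = p.+1 -> code_at Q p [:: CDec r p] ->
  reach Q c (p, f) -> halts Q c <-> f r != 0.
Proof.
move=> Hsz Hloop Hreach; have [Hz|Hz] := eqVneq (f r) 0; split=> // Hh.
  have [H1 H2] := Hloop 0 erefl; rewrite addn0 in H1 H2.
  have Hfix : cstep Q (p, f) = (p, f) by rewrite /cstep H2 H1 /= Hz.
  by have := halts_fixpoint Hreach Hfix Hh; rewrite Hsz ltnn.
have [t Ht] := reach_trans Hreach (reach_dec_succ Hloop Hz).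
by exists t; rewrite Ht Hsz.
Qed.

Definition ireg i := match i with CInc r | CDec r _ => r end.
Definition regs_below m (Q : seq cinstr) := all (fun i => ireg i < m) Q.

Lemma regs_below_exists P n : exists m, n < m /\ regs_below m P.
Proof.
elim: P => [|i P [m [Hm HP]]]; first by exists n.+1.
exists (maxn m (ireg i).+1); split; first lia.
by rewrite /= leq_max ltnSn orbT; apply: sub_all HP => j /= Hj; rewrite leq_max Hj.
Qed.

(** * Relocatable code and macros *)

(* A macro is code parameterised by the address it is loaded at, which its jumps need. *)
Definition macro := nat -> seq cinstr.

Definition runs (M : macro) (f g : nat -> nat) :=
  forall Q a, code_at Q a (M a) -> reach Q (a, f) (a + size (M a), g).

Definition mseq (M1 M2 : macro) : macro := fun a => M1 a ++ M2 (a + size (M1 a)).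
Infix ";;" := mseq (at level 60, right associativity).

Lemma runs_seq M1 M2 f g h : runs M1 f g -> runs M2 g h -> runs (M1 ;; M2) f h.
Proof.
move=> H1 H2 Q a /code_at_cat [C1 C2]; rewrite size_cat addnA.
exact: reach_trans (H1 _ _ C1) (H2 _ _ C2).
Qed.

Lemma runs_ext M f g g' : runs M f g -> g =1 g' -> runs M f g'.
Proof. by move=> H /functional_extensionality <-. Qed.

Definition incs (ss : seq nat) : macro := fun _ => map CInc ss.

Lemma runs_incs ss f : runs (incs ss) f (fun x => f x + count_mem x ss).
Proof. by move=> Q a; rewrite size_map; apply: reach_incs. Qed.

(* Macros keep register [zero_reg] at zero, so that [CDec zero_reg a] is an
   unconditional jump to [a]. *)
Definition zero_reg := 9.

Definition while_dec c (body : macro) : macro := fun a =>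
  CDec c (a + (size (body a.+1)).+2) :: body a.+1 ++ [:: CDec zero_reg a].

Lemma runs_while c body (inv : (nat -> nat) -> Prop) (step out : (nat -> nat) -> nat -> nat) :
  (forall h, inv h -> h zero_reg = 0) ->
  (forall h, inv h -> h c = 0 -> out h =1 h) ->
  (forall h, inv h -> h c != 0 ->
     [/\ runs body (decr_reg h c) (step h), inv (step h), step h c < h c
       & out (step h) =1 out h]) ->
  forall f, inv f -> runs (while_dec c body) f (out f).
Proof.
move=> Hzero Hexit Hbody f.
elim: {f}(f c).+1 {-2}f (ltnSn (f c)) => // n IH f Hn Hf Q a HQ.
have [Hhead /code_at_cat [Hbd Hjmp]] := code_at_cat (B1 := [:: _]) HQ.
move: Hbd Hjmp; rewrite /= addn1 => Hbd Hjmp.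
have -> : a + size (while_dec c body a) = a + (size (body a.+1)).+2 by rewrite /= size_cat addn1.
have [Hc|Hc] := eqVneq (f c) 0.
  rewrite (functional_extensionality _ _ (Hexit f Hf Hc)).
  exact: reach_dec_zero Hhead Hc.
have [Hrun Hinv Hlt Hout] := Hbody f Hf Hc.
apply: reach_trans (reach_dec_succ Hhead Hc) _.
apply: reach_trans (Hrun _ _ Hbd) _.
apply: reach_trans (reach_dec_zero Hjmp (Hzero _ Hinv)) _.
have Hn' : step f c < n by lia.
rewrite -(functional_extensionality _ _ Hout).
by have := IH _ Hn' Hinv _ _ HQ; rewrite /= size_cat addn1.
Qed.

Definition move_to r ss : macro := while_dec r (incs ss).

Lemma runs_move_to r ss f : r \notin ss -> zero_reg \notin ss -> f zero_reg = 0 ->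
  runs (move_to r ss) f (fun x => if x == r then 0 else f x + count_mem x ss * f r).
Proof.
move=> /count_memPn Hr /count_memPn Hz.
apply: (@runs_while r _ (fun h => h zero_reg = 0) (fun h x => decr_reg h r x + count_mem x ss)
  (fun h x => if x == r then 0 else h x + count_mem x ss * h r)) => // h.
- by move=> _ Hh x; case: eqP => [->|_]; rewrite ?Hh ?muln0 ?addn0.
move=> Hh0 Hhr; split; first exact: runs_incs.
- by rewrite /decr_reg Hz addn0; case: ifP; rewrite Hh0.
- by rewrite /decr_reg eqxx Hr; lia.
- by move=> x; rewrite /decr_reg eqxx Hr; case: eqP => // _; nia.
Qed.

Definition triangle n := (n * n.+1)./2.

Lemma triangleS n : triangle n.+1 = triangle n + n.+1.
Proof.
rewrite /triangle (_ : n.+1 * n.+2 = n * n.+1 + n.+1.*2); last by rewrite -mul2n; lia.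
by rewrite halfD odd_double andbF doubleK.
Qed.

Ltac solve_regs :=
  try move=> ?; try rewrite /decr_reg; rewrite /= ?inE ?negb_or /= ?mul0n ?mul1n ?addn0 ?add0n;
  repeat (case: eqP => ?; subst => //=); lia.

(* Each round moves the counter [c] through [y] and back via [t], adding [c] to [y]. *)
Definition add_triangle c y t : macro :=
  while_dec c (incs [:: y] ;; move_to c [:: y; t] ;; move_to t [:: c]).

Lemma runs_add_triangle c y t f : uniq [:: c; y; t; zero_reg] -> f t = 0 -> f zero_reg = 0 ->
  runs (add_triangle c y t) f (fun x => if x == c then 0 else f x + (x == y) * triangle (f c)).
Proof.
rewrite /= !inE !negb_or.
move=> /and4P [/and3P [/eqP Hcy /eqP Hct /eqP Hcz] /andP [/eqP Hyt /eqP Hyz] /eqP Htz _] Hft Hfz.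
apply: (@runs_while c _ (fun h => h t = 0 /\ h zero_reg = 0)
  (fun h x => if x == c then (h c).-1 else if x == y then h y + h c else h x)
  (fun h x => if x == c then 0 else h x + (x == y) * triangle (h c))) => //.
- by move=> h [].
- by move=> h _ Hh x; rewrite Hh; solve_regs.
move=> h [Ht Hz] /eqP Hc; split.
- apply: runs_seq; first exact: runs_incs.
  apply: runs_seq; first by apply: runs_move_to; solve_regs.
  by apply: runs_ext; first apply: runs_move_to; solve_regs.
- by split; solve_regs.
- by solve_regs.
- move=> x; rewrite /= eqxx; case: eqP => // _; case: eqP => [->|_]; last lia.
  by case: (h c) Hc => [//|n] _; rewrite triangleS /=; lia.
Qed.

(* Registers 6, 7 and 8 are scratch registers of the pairing macro. *)
Definition pair_into x y : macro :=
  move_to y [:: 6; 8] ;; move_to x [:: 6] ;; add_triangle 6 y 7 ;; move_to 8 [:: y].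

Lemma npairE a b : npair a b = triangle (a + b) + b.
Proof. by []. Qed.

Lemma runs_pair_into x y f : uniq [:: x; y; 6; 7; 8; zero_reg] ->
  f 6 = 0 -> f 7 = 0 -> f 8 = 0 -> f zero_reg = 0 ->
  runs (pair_into x y) f (fun z => if z == x then 0 else if z == y then npair (f x) (f y) else f z).
Proof.
rewrite /= !inE !negb_or.
move=> /and3P [/and5P [/eqP ? /eqP ? /eqP ? /eqP ? /eqP ?] /and4P [/eqP ? /eqP ? /eqP ? /eqP ?] _].
move=> H6 H7 H8 Hz.
apply: (runs_seq (g := fun z => if z == y then 0 else if z == 6 then f y
                               else if z == 8 then f y else f z)).
  by apply: runs_ext; first apply: runs_move_to; solve_regs.
apply: (runs_seq (g := fun z => if z == x then 0 else if z == y then 0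
                               else if z == 6 then f x + f y else if z == 8 then f y else f z)).
  by apply: runs_ext; first apply: runs_move_to; solve_regs.
apply: (runs_seq (g := fun z => if z == x then 0 else if z == y then triangle (f x + f y)
                               else if z == 8 then f y else f z)).
  by apply: runs_ext; first apply: runs_add_triangle; solve_regs.
by apply: runs_ext; first apply: runs_move_to; rewrite ?npairE; solve_regs.
Qed.

Definition push_const K : macro := incs (nseq K 5) ;; pair_into 5 4.

Definition enc_state (a2 v : nat) x := if x == 2 then a2 else if x == 4 then v else 0.

Lemma runs_push_const K a2 v : runs (push_const K) (enc_state a2 v) (enc_state a2 (npair K v)).
Proof.
apply: (runs_seq (g := fun x => enc_state a2 v x + (5 == x) * K)).
  by apply: runs_ext; first exact: runs_incs; move=> x; rewrite count_nseq.
by apply: runs_ext; first apply: runs_pair_into; rewrite /enc_state; solve_regs.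
Qed.

Definition pin_input (S : tsl) (A : nat) := FAnd S (FPred (PEq (SVar 2) (TConst (Posz A)))).

Lemma enc_pin_input nR S A : enc_instance nR 0 (pin_input S A) =
  npair nR (npair 0 (npair 5 (npair (enc_tsl S) (npair 0 (npair 0 (npair 8 (npair 0 A.*2))))))).
Proof. by []. Qed.

Definition input_regs A x := if x == 1 then A else 0.

(* Register 4 accumulates the code of [pin_input S A] from the inside out, starting
   from [A.*2 = enc_int A], while register 2 keeps [A] until it is paired in. The
   constants pushed are the tags of [TConst], [PEq], [FPred] and [FAnd], the code [8]
   of [SVar 2], and the number [0] of input variables. *)
Definition encoder nR : macro :=
  move_to 1 [:: 2; 3] ;; move_to 3 [:: 4; 4] ;;
  push_const 0 ;; push_const 8 ;; push_const 0 ;; push_const 0 ;; pair_into 2 4 ;;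
  push_const 5 ;; push_const 0 ;; push_const nR ;; move_to 4 [:: 0].

Lemma runs_encoder nR S : runs (encoder nR) (input_regs (enc_tsl S))
  (cinit (enc_instance nR 0 (pin_input S (enc_tsl S)))).2.
Proof.
rewrite enc_pin_input; set A := enc_tsl S.
apply: (runs_seq (g := fun x => if x == 2 then A else if x == 3 then A else 0)).
  by apply: runs_ext; first apply: runs_move_to; rewrite /input_regs; solve_regs.
apply: (runs_seq (g := enc_state A A.*2)).
  by apply: runs_ext; first apply: runs_move_to; rewrite /enc_state; solve_regs.
do 4 (apply: runs_seq; first exact: runs_push_const).
apply: (runs_seq (g := enc_state 0 (npair A (npair 0 (npair 0 (npair 8 (npair 0 A.*2))))))).
  by apply: runs_ext; first apply: runs_pair_into; rewrite /enc_state; solve_regs.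
do 3 (apply: runs_seq; first exact: runs_push_const).
by apply: runs_ext; first apply: runs_move_to; rewrite /enc_state; solve_regs.
Qed.

Definition relocate_instr k n i :=
  match i with CInc r => CInc r | CDec r j => CDec r (k + minn j n) end.

(* Jumps out of [P] all land on its exit address [k + size P]. *)
Definition relocate (P : seq cinstr) : macro := fun k => map (relocate_instr k (size P)) P.

Lemma reach_relocate P Q k t c : code_at Q k (relocate P k) ->
  reach Q (k + minn c.1 (size P), c.2) (k + minn (crun P t c).1 (size P), (crun P t c).2).
Proof.
move=> HQ; elim: t => [|t IH]; first exact: reach_refl.
apply: reach_trans IH _; rewrite crunS; case: (crun P t c) => pc f.
have [Hpc|Hpc] := ltnP pc (size P).
  2: by rewrite cstep_halted //= (minn_idPr Hpc); apply: reach_refl.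
have := code_at_nth HQ (_ : pc < size (relocate P k)); rewrite size_map => /(_ Hpc).
rewrite (nth_map (CInc 0)) // /cstep Hpc /=.
case: (nth (CInc 0) P pc) => [r|r j] /= Hcode.
  by rewrite (minn_idPl Hpc) addnS; apply: reach_inc Hcode.
case: eqP => Hz /=; first exact: reach_dec_zero Hcode Hz.
by rewrite (minn_idPl Hpc) addnS; apply: reach_dec_succ Hcode _; apply/eqP.
Qed.

Lemma runs_relocate P f t :
  size P <= (crun P t (0, f)).1 -> runs (relocate P) f (crun P t (0, f)).2.
Proof.
move=> Ht Q k HQ; have := reach_relocate t (0, f) HQ.
by rewrite min0n addn0 (minn_idPr Ht) size_map.
Qed.

Definition macro_regs_below m (M : macro) := forall a, regs_below m (M a).

Lemma macro_regs_below_seq m M1 M2 : macro_regs_below m M1 -> macro_regs_below m M2 ->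
  macro_regs_below m (M1 ;; M2).
Proof.
by move=> H1 H2 a; rewrite /regs_below all_cat; apply/andP; split; [apply: H1 | apply: H2].
Qed.

Lemma macro_regs_below_incs m ss : all (fun r => r < m) ss -> macro_regs_below m (incs ss).
Proof. by move=> Hss a; rewrite /regs_below all_map. Qed.

Lemma macro_regs_below_while m c body : c < m -> zero_reg < m -> macro_regs_below m body ->
  macro_regs_below m (while_dec c body).
Proof.
move=> Hc Hz Hb a; rewrite /regs_below /= all_cat Hc.
by apply/and3P; split=> //=; [apply: Hb | rewrite Hz].
Qed.

Lemma macro_regs_below_encoder m nR : zero_reg < m -> macro_regs_below m (encoder nR).
Proof.
move=> Hm; rewrite /encoder /push_const /pair_into /add_triangle /move_to.
repeat first [ apply: macro_regs_below_seq | apply: macro_regs_below_while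
             | apply: macro_regs_below_incs ]; rewrite /= ?all_nseq /zero_reg in Hm *; lia.
Qed.

Lemma macro_regs_below_relocate m P : regs_below m P -> macro_regs_below m (relocate P).
Proof. by move=> HP a; rewrite /regs_below all_map; apply: sub_all HP => -[r|r j]. Qed.

(** * TSL formulas simulating a counter machine *)

Definition bigAnd (fs : seq tsl) := foldr FAnd FTrue fs.
Definition fImp a b := FNot (FAnd a (FNot b)).
Definition fIte a b c := FAnd (fImp a b) (fImp (FNot a) c).
Definition fG f := FNot (FUntil FTrue (FNot f)).
Definition fF f := FUntil FTrue f.

Section DerivedConnectives.
Variables (rs ins : nat -> valuation).

Lemma holds_bigAnd j (F : nat -> tsl) s :
  holds rs ins j (bigAnd (map F s)) <-> (forall x, x \in s -> holds rs ins j (F x)).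
Proof.
elim: s => [|y s IH] /=; first by split.
rewrite IH; split=> [[Hy Hs] x|H].
  by rewrite in_cons => /orP [/eqP ->|/Hs].
by split=> [|x Hx]; apply: H; rewrite in_cons ?eqxx ?Hx ?orbT.
Qed.

Lemma holds_fImp j a b : holds rs ins j (fImp a b) <-> (holds rs ins j a -> holds rs ins j b).
Proof. by split=> /= H; [move=> Ha; apply: NNPP => Hb | ]; tauto. Qed.

Lemma holds_fIte_true j a b c :
  holds rs ins j a -> holds rs ins j (fIte a b c) <-> holds rs ins j b.
Proof. by move=> Ha /=; split=> [[H1 H2]|]; [apply: NNPP|]; tauto. Qed.

Lemma holds_fIte_false j a b c :
  ~ holds rs ins j a -> holds rs ins j (fIte a b c) <-> holds rs ins j c.
Proof. by move=> Ha /=; split=> [[H1 H2]|]; [apply: NNPP|]; tauto. Qed.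

Lemma holds_fG j f : holds rs ins j (fG f) <-> forall k, j <= k -> holds rs ins k f.
Proof.
split=> /= H; last by move=> [k [Hk [Hn _]]]; apply/Hn/H.
by move=> k Hk; apply: NNPP => Hn; apply: H; exists k.
Qed.

Lemma holds_fF j f : holds rs ins j (fF f) <-> exists k, j <= k /\ holds rs ins k f.
Proof. by split=> /= [[k [? [? _]]]|[k [? ?]]]; exists k. Qed.
End DerivedConnectives.

(* State variable [0] holds the program counter and state variable [x.+1] holds
   register [x], for the [m] registers [x < m]. *)
Definition encodes m (c : cconfig) (v : valuation) :=
  v 0 = Posz c.1 /\ forall x, x < m -> v x.+1 = Posz (c.2 x).

Definition keep_others m r := bigAnd [seq FUpd x.+1 (SVar x.+1) | x <- iota 0 m & x != r].

Definition transF m e0 r er := FAnd (FUpd 0 e0) (FAnd (FUpd r.+1 er) (keep_others m r)).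

Lemma holds_transF rs ins k m e0 r er :
  holds rs ins k (transF m e0 r er) <->
  [/\ rs k.+1 0 = eval_term (rs k) (ins k) e0, rs k.+1 r.+1 = eval_term (rs k) (ins k) er
    & forall x, x < m -> x != r -> rs k.+1 x.+1 = rs k x.+1].
Proof.
rewrite /= /keep_others holds_bigAnd; split=> [[E0 [Er Ek]]|[E0 Er Ek]].
  by split=> // x Hx Hxr; apply: (Ek x); rewrite mem_filter mem_iota Hxr; lia.
by do 2!split=> //; move=> x; rewrite mem_filter mem_iota => /andP [Hxr Hx]; apply: Ek; lia.
Qed.

Lemma holds_transF_encodes rs ins k m pc f pc' g e0 r er : r < m ->
  encodes m (pc, f) (rs k) -> (forall x, x != r -> g x = f x) ->
  eval_term (rs k) (ins k) e0 = Posz pc' -> eval_term (rs k) (ins k) er = Posz (g r) ->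
  holds rs ins k (transF m e0 r er) <-> encodes m (pc', g) (rs k.+1).
Proof.
move=> Hr [_ Hf] Hg He0 Her; rewrite holds_transF He0 Her; split=> [[E0 Er Ek]|[E0 Ek]].
  split=> // x Hx; have [->|Hxr] := eqVneq x r; first exact: Er.
  by rewrite /= Ek // Hf // Hg.
split=> [||x Hx Hxr]; [exact: E0 | exact: Ek |].
by rewrite Ek //= Hf // Hg.
Qed.

Definition pcEq i := PEq (SVar 0) (TConst (Posz i)).
Definition zeroP r := PEq (SVar r.+1) (TConst 0).

(* A jump rewrites register [r] with its own value, so that all cases share the shape
   of [transF]. *)
Definition instrF m i :=
  match i with
  | CInc r => transF m (TInc (SVar 0)) r (TInc (SVar r.+1))
  | CDec r j => fIte (FPred (zeroP r)) (transF m (TConst (Posz j)) r (SVar r.+1))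
                     (transF m (TInc (SVar 0)) r (TDec (SVar r.+1)))
  end.

Lemma holds_instrF Q m rs ins k c : regs_below m Q -> encodes m c (rs k) -> c.1 < size Q ->
  holds rs ins k (instrF m (nth (CInc 0) Q c.1)) <-> encodes m (cstep Q c) (rs k.+1).
Proof.
case: c => pc f /all_nthP HQ Hc /= Hpc; have := HQ (CInc 0) pc Hpc.
have [H0 Hf] := Hc; rewrite /cstep Hpc.
have Hpc1 : eval_term (rs k) (ins k) (TInc (SVar 0)) = Posz pc.+1.
  by rewrite /= H0 /=; lia.
case: nth => [r|r j] Hr.
  apply: (holds_transF_encodes Hr Hc) => //; first by move=> x /negbTE ->.
  by rewrite /= eqxx Hf //=; lia.
have [Hz|Hz] := eqVneq (f r) 0.
  rewrite holds_fIte_true; last by rewrite /= Hf //= Hz.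
  by apply: (holds_transF_encodes Hr Hc) => //=; rewrite Hf.
rewrite holds_fIte_false; last by rewrite /= Hf //=; case: (f r) Hz.
apply: (holds_transF_encodes Hr Hc) => //; first by move=> x /negbTE ->.
by rewrite /= eqxx Hf //=; case: (f r) Hz => // n _; lia.
Qed.

Definition stepF Q m :=
  bigAnd [seq fImp (FPred (pcEq i)) (instrF m (nth (CInc 0) Q i)) | i <- iota 0 (size Q)].
Definition initF m := FAnd (FPred (pcEq 0)) (bigAnd [seq FPred (zeroP x) | x <- iota 0 m & x != 1]).
Definition haltF (Q : seq cinstr) := bigAnd [seq FNot (FPred (pcEq i)) | i <- iota 0 (size Q)].
Definition simF Q m := FAnd (initF m) (FAnd (fG (stepF Q m)) (fF (haltF Q))).

Lemma holds_pin_simF rs ins Q m A :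
  holds rs ins 0 (pin_input (simF Q m) A) <->
  [/\ holds rs ins 0 (pin_input (initF m) A), forall k, holds rs ins k (stepF Q m)
    & exists k, holds rs ins k (haltF Q)].
Proof.
have HG := holds_fG rs ins 0 (stepF Q m); have HF := holds_fF rs ins 0 (haltF Q).
split=> [[[Hi [Hs Hh]] Ha]|[[Hi Ha] Hs Hh]].
  move/HG: Hs => Hs; move/HF: Hh => [k [_ Hh]].
  by split=> //; [move=> j; exact: Hs | exists k].
split=> //; split=> //; split; first by apply/HG => j _; apply: Hs.
by apply/HF; case: Hh => j Hj; exists j.
Qed.

Lemma encodes_input rs ins m A :
  holds rs ins 0 (pin_input (initF m) A) -> encodes m (0, input_regs A) (rs 0).
Proof.
move=> [[/eqP H0 /holds_bigAnd Hz] /eqP HA]; split=> // x Hx.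
rewrite /input_regs /=; case: eqP => [->|/eqP Hx1] //.
by apply/eqP/(Hz x); rewrite mem_filter mem_iota Hx1 /=; lia.
Qed.

Lemma sim_invariant Q m rs ins c : regs_below m Q -> encodes m c (rs 0) ->
  (forall k, holds rs ins k (stepF Q m)) ->
  forall k, size Q <= (crun Q k c).1 \/ encodes m (crun Q k c) (rs k).
Proof.
move=> HQ H0 Hstep; elim=> [|k [Hhalt|Henc]]; [by right | left | ].
  by rewrite crunS cstep_halted.
have [Hpc|Hpc] := ltnP (crun Q k c).1 (size Q); last by left; rewrite crunS cstep_halted.
right; rewrite crunS -(holds_instrF ins HQ Henc Hpc).
have Hin : (crun Q k c).1 \in iota 0 (size Q) by rewrite mem_iota.
have /holds_bigAnd/(_ _ Hin)/holds_fImp := Hstep k; apply.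
by rewrite /= (proj1 Henc).
Qed.

Lemma holds_sim_halts Q m A rs ins : regs_below m Q ->
  holds rs ins 0 (pin_input (simF Q m) A) -> halts Q (0, input_regs A).
Proof.
move=> HQ /holds_pin_simF [/encodes_input H0 Hstep [k Hhalt]].
exists k; have [//|[Hpc _]] := sim_invariant HQ H0 Hstep k.
rewrite leqNgt; apply/negP => Hlt; move/holds_bigAnd: Hhalt.
by move/(_ (crun Q k (0, input_regs A)).1); rewrite mem_iota /= Hpc eqxx; apply.
Qed.

Definition config_val m (c : cconfig) : valuation :=
  fun r => if r is x.+1 then (if x < m then Posz (c.2 x) else 0) else Posz c.1.

Lemma encodes_config_val m c : encodes m c (config_val m c).
Proof. by split=> // x /= ->. Qed.

Lemma holds_sim_run Q m A ins t : regs_below m Q -> 1 < m ->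
  size Q <= (crun Q t (0, input_regs A)).1 ->
  holds (fun k => config_val m (crun Q k (0, input_regs A))) ins 0 (pin_input (simF Q m) A).
Proof.
move=> HQ Hm Ht; set c := (0, input_regs A) in Ht *; set rs := fun k => config_val m (crun Q k c).
have Henc k : encodes m (crun Q k c) (rs k) by exact: encodes_config_val.
apply/holds_pin_simF; split; first split.
- split=> //; apply/holds_bigAnd => x; rewrite mem_filter mem_iota => /andP [Hx1 Hx].
  by rewrite /= /rs /config_val /= ifT 1?lia // /input_regs (negbTE Hx1).
- by rewrite /= /rs /config_val /= ifT.
- move=> k; apply/holds_bigAnd => i; rewrite mem_iota => Hi.
  apply/holds_fImp => /= /eqP [Hpc]; rewrite -Hpc.
  apply/(holds_instrF ins HQ (Henc k)); first by rewrite Hpc; lia.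
  by rewrite -crunS; apply: Henc.
- exists t; apply/holds_bigAnd => i; rewrite mem_iota => Hi /=.
  by rewrite /rs /config_val /= => /eqP [Hpc]; lia.
Qed.

(* The realizing machine replays a halting run of [Q]: its state counts the steps
   up to the halting time [t] and the updates write the next configuration as
   constants. *)
Definition replay_mealy Q m c t : mealy :=
  @Mealy 'I_t.+1 ord0 0 (fun _ => PEq (TConst 0) (TConst 0)) (config_val m c)
    (fun q _ => inord (minn q.+1 t)) (fun q _ r => TConst (config_val m (crun Q q.+1 c) r)).

Lemma mrun_replay_mealy Q m c t ins : size Q <= (crun Q t c).1 -> forall k,
  (mrun m.+1 (replay_mealy Q m c t) ins k).2 = config_val m (crun Q k c).
Proof.
move=> Ht k; suff [] : nat_of_ord (mrun m.+1 (replay_mealy Q m c t) ins k).1 = minn k t /\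
  (mrun m.+1 (replay_mealy Q m c t) ins k).2 = config_val m (crun Q k c) by [].
elim: k => [|k IH] /=; first by rewrite min0n.
case: (mrun _ _ _ k) IH => q rv /= [Hq ->]; split; first by rewrite inordK Hq; lia.
apply: functional_extensionality => r; rewrite /apply_update Hq /= -!crunS.
have -> : crun Q (minn k t).+1 c = crun Q k.+1 c.
  by case: (ltnP k t) => Hk //; rewrite !(crun_halted Ht) //; lia.
by case: ifP => // Hr; rewrite /config_val; case: r Hr => // x; rewrite ltnS => ->.
Qed.

Lemma realizable_sim_iff_halts Q m A : regs_below m Q -> 1 < m ->
  realizable m.+1 0 (pin_input (simF Q m) A) <-> halts Q (0, input_regs A).
Proof.
move=> HQ Hm; split=> [[M [_ HM]]|[t Ht]].
  exact: holds_sim_halts HQ (HM (fun _ _ => 0%R)).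
exists (replay_mealy Q m (0, input_regs A) t); split=> // ins.
rewrite (functional_extensionality _ _ (mrun_replay_mealy m ins Ht)).
exact: holds_sim_run HQ Hm Ht.
Qed.

Lemma wf_bigAnd nR nI fs : wf_tsl nR nI (bigAnd fs) = all (wf_tsl nR nI) fs.
Proof. by elim: fs => //= f fs ->. Qed.

Lemma wf_sim Q m A : regs_below m Q -> 1 < m -> wf_tsl m.+1 0 (pin_input (simF Q m) A).
Proof.
move=> /all_nthP HQ Hm.
have Hkeep r : wf_tsl m.+1 0 (keep_others m r).
  by rewrite wf_bigAnd all_map; apply/allP => x; rewrite mem_filter mem_iota /=; lia.
rewrite /= !wf_bigAnd !all_map /= andbT ltnS Hm andbT; apply/and3P; split.
- by apply/allP => x; rewrite mem_filter mem_iota /=; lia.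
- apply/allP => i; rewrite mem_iota /= => Hi; have := HQ (CInc 0) i Hi.
  by case: nth => [r|r j] /= Hr; rewrite ?Hkeep /=; lia.
- exact/allP.
Qed.

(** * The diagonal machine *)

(* The final instruction loops forever iff [P] leaves [0] in register 0, its answer
   "realizable". *)
Definition diag_prog nR P :=
  let B := (encoder nR ;; relocate P) 0 in rcons B (CDec 0 (size B)).

Lemma diag_prog_halts nR P S t :
  let n := enc_instance nR 0 (pin_input S (enc_tsl S)) in
  size P <= (crun P t (cinit n)).1 ->
  halts (diag_prog nR P) (0, input_regs (enc_tsl S)) <-> (crun P t (cinit n)).2 0 != 0.
Proof.
move=> n Ht; set B := (encoder nR ;; relocate P) 0.
have [HB Hloop] := code_at_cat (@code_at_self (B ++ [:: CDec 0 (size B)])).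
rewrite /diag_prog -cats1; apply: halts_iff_loop Hloop _; first by rewrite size_cat addn1.
have Hrun : runs (encoder nR ;; relocate P) (input_regs (enc_tsl S)) (crun P t (0, (cinit n).2)).2.
  by apply: runs_seq; [exact: runs_encoder | exact: runs_relocate].
by have := Hrun _ _ HB; rewrite add0n.
Qed.

Lemma regs_below_diag_prog m nR P : zero_reg < m -> regs_below m P ->
  regs_below m (diag_prog nR P).
Proof.
move=> Hm HP; rewrite /diag_prog /regs_below all_rcons /=; apply/andP; split.
  by rewrite /zero_reg in Hm; lia.
exact: macro_regs_below_seq (macro_regs_below_encoder nR Hm) (macro_regs_below_relocate HP) 0.
Qed.

Theorem mainTheorem1 :
  ~ exists P : seq cinstr,
      forall (nR nI : nat) (f : tsl), wf_tsl nR nI f ->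
        exists t,
          let c := crun P t (cinit (enc_instance nR nI f)) in
          (size P <= c.1)%N /\ (realizable nR nI f <-> c.2 0%N = 0%N).
Proof.
move=> [P HP].
have [m [Hm HPm]] := regs_below_exists P zero_reg.
have Hm1 : 1 < m by rewrite /zero_reg in Hm; lia.
set Q := diag_prog m.+1 P; set S := simF Q m.
have HQm : regs_below m Q by exact: regs_below_diag_prog.
have [t [Hhalt Hdecide]] := HP m.+1 0 (pin_input S (enc_tsl S)) (wf_sim _ HQm Hm1).
have := realizable_sim_iff_halts (enc_tsl S) HQm Hm1.
rewrite (diag_prog_halts Hhalt) Hdecide.
by case: eqP => [Hv|Hv] [H1 H2]; [move: (H1 Hv) | apply/Hv/H2].
Qed.
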